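(* For $n\geq 3$ and $l\in\mathbb{N}$ let $Q^n_l=\operatorname{conv}\{\,l C_{n-1}\times\{0\},\ \pm e_n\}\subset\mathbb{R}^n$, where $C_{n-1}=[-1,1]^{n-1}$ and $e_n$ is the $n$th standard unit vector. Then for every constant $c$ there exists $l\in\mathbb{N}$ such that $\mathrm{g}_{n-2}(Q^n_l)> c\,\sigma_{n-2}(Q^n_l)$. If $n\geq 4$, then likewise for every constant $c$ there exists $l\in\mathbb{N}$ such that $\mathrm{g}_{n-3}(Q^n_l)> c\,\sigma_{n-3}(Q^n_l)$.
   Context: For a lattice polytope $P\subset\mathbb{R}^n$ (all vertices in $\mathbb{Z}^n$) of dimension $n$, the function $k\mapsto \mathrm{G}(kP)=\#(kP\cap\mathbb{Z}^n)$, $k\in\mathbb{N}$, is a polynomial of degree $n$ (Ehrhart); write $\mathrm{G}(kP)=\sum_{i=0}^n \mathrm{g}_i(P)k^i$. For a $0$-symmetric convex body $K\subset\mathbb{R}^n$ (compact, convex, nonempty interior) and a lattice $\Lambda$, the successive minima are $\lambda_i(K,\Lambda)=\min\{\lambda>0:\dim(\lambda K\cap\Lambda)\geq i\}$, $1\le i\le n$, where $\dim$ is the dimension of the affine hull; $\lambda_i(K)=\lambda_i(K,\mathbb{Z}^n)$. For a polytope $P$, $DP=P-P$ and $\sigma_i(P)=\sigma_i\big(1/\lambda_1(DP),\dots,1/\lambda_n(DP)\big)$, where $\sigma_i(x_1,\dots,x_n)=\sum_{I\subseteq\{1,\dots,n\},\#I=i}\prod_{j\in I}x_j$ is the $i$th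 elementary symmetric polynomial. *)

From HB Require Import structures.
From mathcomp Require Import all_boot all_order all_algebra.
From mathcomp Require Import boolp classical_sets reals.

Set Implicit Arguments.
Unset Strict Implicit.
Unset Printing Implicit Defensive.

Import Order.TTheory GRing.Theory Num.Theory.
Local Open Scope ring_scope.
Local Open Scope classical_set_scope.

Definition vecR {R : realType} {n : nat} (z : 'rV[int]_n) : 'rV[R]_n :=
  map_mx (fun a : int => a%:~R) z.

Definition conv {R : realType} {n : nat} (S : set 'rV[R]_n) : set 'rV[R]_n :=
  [set x | exists (m : nat) (w : 'I_m -> R) (v : 'I_m -> 'rV[R]_n),
     (forall i, 0 <= w i) /\ \sum_(i < m) w i = 1 /\
     (forall i, S (v i)) /\ x = \sum_(i < m) w i *: v i].

Definition dilate {R : realType} {n : nat} (t : R) (K : set 'rV[R]_n)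
  : set 'rV[R]_n := [set t *: x | x in K].

Definition diffbody {R : realType} {n : nat} (K : set 'rV[R]_n)
  : set 'rV[R]_n := [set z | exists x y, K x /\ K y /\ z = x - y].

Definition lattice_count {R : realType} {n : nat} (K : set 'rV[R]_n)
  (N : nat) : Prop :=
  exists s : seq 'rV[int]_n,
    uniq s /\ (forall z, z \in s <-> K (vecR z)) /\ size s = N.

(* p is the Ehrhart polynomial of P:  G(kP) = p(k) for all k in N.
   (Such a polynomial is unique, as it is determined on infinitely many points.) *)
Definition is_ehrhart_poly {R : realType} {n : nat} (P : set 'rV[R]_n)
  (p : {poly R}) : Prop :=
  forall k : nat, exists N : nat,
    lattice_count (dilate k%:R P) N /\ p.[k%:R] = N%:R.

(* dim aff(A ∩ Z^n) >= i : there are i+1 affinely independent lattice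
   points in A. *)
Definition lattice_affdim_ge {R : realType} {n : nat} (A : set 'rV[R]_n)
  (i : nat) : Prop :=
  exists z : 'I_i.+1 -> 'rV[int]_n,
    (forall j, A (vecR (z j))) /\
    row_free (\matrix_(j < i) (vecR (z (lift ord0 j)) - vecR (z ord0)) : 'M[R]_(i, n)).

(* successive minimum lambda_i(K, Z^n) (the minimum is attained, so it
   equals the infimum). *)
Definition succ_min {R : realType} {n : nat} (K : set 'rV[R]_n) (i : nat) : R :=
  inf [set t : R | 0 < t /\ lattice_affdim_ge (dilate t K) i].

Definition esym {R : realType} {n : nat} (x : 'I_n -> R) (i : nat) : R :=
  \sum_(I : {set 'I_n} | #|I| == i) \prod_(j in I) x j.

Definition sigma_poly {R : realType} {n : nat} (P : set 'rV[R]_n) (i : nat) : R :=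
  esym (fun j : 'I_n => 1 / succ_min (diffbody P) (j.+1)) i.

(* e_n: last standard unit vector (coordinate index n-1 in 0-based indexing) *)
Definition e_last {R : realType} (n : nat) : 'rV[R]_n :=
  \row_(j < n) (if val j == n.-1 then 1 else 0).

Definition cube_times0 {R : realType} (n l : nat) : set 'rV[R]_n :=
  [set x | forall j : 'I_n,
     if val j == n.-1 then x 0 j = 0 else `|x 0 j| <= l%:R].

Definition Qnl {R : realType} (n l : nat) : set 'rV[R]_n :=
  conv (@cube_times0 R n l `|` [set @e_last R n; - @e_last R n]).
Arguments e_last {R} n.
Arguments cube_times0 {R} n l.
Arguments Qnl {R} n l.

From Pilot Require Import Defs.
From HB Require Import structures.
From mathcomp Require Import all_boot all_order all_algebra.
From mathcomp Require Import boolp classical_sets reals.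
From mathcomp Require Import ring lra zify.

Set Implicit Arguments.
Unset Strict Implicit.
Unset Printing Implicit Defensive.

Import Order.TTheory GRing.Theory Num.Theory.
Local Open Scope ring_scope.

(* Slicing t Q^n_l by the last coordinate h gives the cube of half-side l (t - |h|), so
   G(kQ) = (2lk + 1)^(n-1) + 2 \sum_(j < k) (2lj + 1)^(n-1).  Expanding the power sums
   with Faulhaber's formulas shows that the coefficients g_(n-2) and g_(n-3) grow like
   (2l)^(n-1), one power of l faster than allowed.  Indeed Q^n_l lies in the cube of
   half-side l, so no nonzero lattice point lies in t DQ for t < 1/(2l); hence every
   1/lambda_i(DQ) is at most 2l and sigma_i(Q) = O(l^i). *)

Section Faulhaber.
Variable R : numFieldType.

(* [faulhaber i] takes the value \sum_(j < k) j ^ i at k.  It is defined by strong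
   recursion on i through the telescoping identity
   k ^ (i + 1) = \sum_(r <= i) 'C(i + 1, r) * \sum_(j < k) j ^ r;
   [faulhaber_seq i] lists the polynomials of index < i. *)
Definition faulhaber_next (F : seq {poly R}) : {poly R} :=
  let i := size F in
  i.+1%:R^-1 *: ('X^(i.+1) - \sum_(r < i) 'C(i.+1, r)%:R *: F`_r).

Fixpoint faulhaber_seq (i : nat) : seq {poly R} :=
  if i is i'.+1 then rcons (faulhaber_seq i') (faulhaber_next (faulhaber_seq i'))
  else [::].

Definition faulhaber (i : nat) : {poly R} := faulhaber_next (faulhaber_seq i).

Lemma size_faulhaber_seq i : size (faulhaber_seq i) = i.
Proof. by elim: i => //= i IH; rewrite size_rcons IH. Qed.

Lemma nth_faulhaber_seq i r : (r < i)%N -> (faulhaber_seq i)`_r = faulhaber r.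
Proof.
elim: i => // i IH; rewrite ltnS leq_eqVlt => /orP[/eqP ->|lt_ri] /=.
  by rewrite nth_rcons size_faulhaber_seq ltnn eqxx.
by rewrite nth_rcons size_faulhaber_seq lt_ri IH.
Qed.

Lemma faulhaberE i : faulhaber i =
  i.+1%:R^-1 *: ('X^(i.+1) - \sum_(r < i) 'C(i.+1, r)%:R *: faulhaber r).
Proof.
rewrite /faulhaber /faulhaber_next size_faulhaber_seq.
by congr (_ *: (_ - _)); apply: eq_bigr => r _; rewrite nth_faulhaber_seq.
Qed.

Lemma coef_faulhaber i d : (faulhaber i)`_d =
  i.+1%:R^-1 * ((d == i.+1)%:R - \sum_(r < i) 'C(i.+1, r)%:R * (faulhaber r)`_d).
Proof.
rewrite faulhaberE coefZ coefB coefXn coef_sum.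
by congr (_ * (_ - _)); apply: eq_bigr => r _; rewrite coefZ.
Qed.

Lemma coef_faulhaber_eq0 i d : (i.+1 < d)%N -> (faulhaber i)`_d = 0.
Proof.
elim/ltn_ind: i => i IH lt_id; rewrite coef_faulhaber gtn_eqF // big1 ?subr0 ?mulr0 //.
by move=> r _; rewrite IH ?mulr0 //; apply: leq_trans lt_id; rewrite !ltnS ltnW.
Qed.

Lemma sum_powers_rec i k :
  i.+1%:R * (\sum_(j < k) (j%:R : R) ^+ i) =
  k%:R ^+ i.+1 - \sum_(r < i) 'C(i.+1, r)%:R * (\sum_(j < k) (j%:R : R) ^+ r).
Proof.
have telescope : (k%:R : R) ^+ i.+1 = \sum_(j < k) ((j.+1%:R : R) ^+ i.+1 - j%:R ^+ i.+1).
  rewrite -(big_mkord xpredT (fun j => (j.+1%:R : R) ^+ i.+1 - j%:R ^+ i.+1)).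
  by rewrite (telescope_sumr (fun j => (j%:R : R) ^+ i.+1)) // expr0n subr0.
have binomial j : (j.+1%:R : R) ^+ i.+1 - j%:R ^+ i.+1 =
    \sum_(r < i) 'C(i.+1, r)%:R * j%:R ^+ r + i.+1%:R * j%:R ^+ i.
  rewrite -addn1 natrD exprD1n !big_ord_recr /= binn binSn mulr1n addrK.
  by congr (_ + _); [apply: eq_bigr => r _|]; rewrite mulr_natl.
rewrite telescope (eq_bigr _ (fun (j : 'I_k) _ => binomial j)) big_split /= exchange_big /=.
rewrite -mulr_sumr; under [X in _ - X]eq_bigr do rewrite mulr_sumr.
by rewrite addrC addrK.
Qed.

Lemma horner_faulhaber i k : (faulhaber i).[k%:R] = \sum_(j < k) (j%:R : R) ^+ i.
Proof.
elim/ltn_ind: i => i IH.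
rewrite faulhaberE hornerZ hornerD hornerN hornerXn horner_sum.
under eq_bigr => r _ do rewrite hornerZ IH //.
by rewrite -sum_powers_rec mulKf ?pnatr_eq0.
Qed.

Lemma natr_bin n m : ('C(n, m)%:R : R) = (n ^_ m)%:R / m`!%:R.
Proof. by rewrite -bin_ffact natrM mulfK // pnatr_eq0 -lt0n fact_gt0. Qed.

Lemma bin_addl m n : 'C(m + n, m) = 'C(m + n, n).
Proof. by rewrite -[X in 'C(_, X)](addnK n m) bin_sub // leq_addl. Qed.

Lemma sum_coef_faulhaber_eq0 i c d : (i <= d)%N ->
  \sum_(r < i) 'C(c, r)%:R * (faulhaber r)`_d.+1 = 0.
Proof.
move=> le_id; rewrite big1 // => r _.
by rewrite coef_faulhaber_eq0 ?mulr0 // ltnS (leq_trans _ le_id).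
Qed.

(* The coefficient of X^(i+1-j) in [faulhaber i] is 'C(i+1, j) B_j / (i+1), with the
   Bernoulli numbers B_0 = 1, B_1 = -1/2, B_2 = 1/6, B_3 = 0. *)
Lemma coef_faulhaber_top i : (faulhaber i)`_i.+1 = i.+1%:R^-1.
Proof.
rewrite coef_faulhaber eqxx big1 ?subr0 ?mulr1 // => r _.
by rewrite coef_faulhaber_eq0 ?mulr0 // ltnS.
Qed.

Lemma coef_faulhaber_top1 i : (faulhaber i.+1)`_i.+1 = - 2^-1.
Proof.
rewrite coef_faulhaber big_ord_recr /= sum_coef_faulhaber_eq0 // add0r coef_faulhaber_top.
rewrite ltn_eqF // -(bin_addl 2 i).
rewrite natr_bin !ffactnS ffactn0 /= !factS fact0 !natrM.
by field; rewrite nat1r -natrD !pnatr_eq0.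
Qed.

Lemma coef_faulhaber_top2 i : (faulhaber i.+2)`_i.+1 = i.+2%:R / 12.
Proof.
rewrite coef_faulhaber !big_ord_recr /= sum_coef_faulhaber_eq0 // add0r.
rewrite coef_faulhaber_top coef_faulhaber_top1 ltn_eqF //.
rewrite -(bin_addl 3 i) -(bin_addl 2 i.+1).
rewrite !natr_bin !ffactnS !ffactn0 /= !factS fact0 !natrM !natrD !mulrS.
by field; rewrite nat1r -!natrD !pnatr_eq0.
Qed.

Lemma coef_faulhaber_top3 i : (faulhaber i.+3)`_i.+1 = 0.
Proof.
rewrite coef_faulhaber !big_ord_recr /= sum_coef_faulhaber_eq0 // add0r.
rewrite coef_faulhaber_top coef_faulhaber_top1 coef_faulhaber_top2 ltn_eqF; last by lia.
rewrite -(bin_addl 4 i) -(bin_addl 3 i.+1) -(bin_addl 2 i.+2).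
rewrite !natr_bin !ffactnS !ffactn0 /= !factS fact0 !natrM !natrD !mulrS.
by field; rewrite nat1r -!natrD !pnatr_eq0.
Qed.
End Faulhaber.

Section EhrhartQ.
Variable R : numFieldType.

Definition countQ (m a k : nat) : nat :=
  ((a * k).+1 ^ m + 2 * \sum_(j < k) (a * j).+1 ^ m)%N.

(* (a X + 1)^m + 2 \sum_(j < X) (a j + 1)^m, after binomial expansion. *)
Definition ehrhartQ (m a : nat) : {poly R} :=
  \sum_(i < m.+1) ('C(m, i) * a ^ i)%:R *: ('X^i + 2%:R *: faulhaber R i).

Lemma horner_ehrhartQ m a k : (ehrhartQ m a).[k%:R] = (countQ m a k)%:R.
Proof.
have binomial x : ((a * x)%N.+1%:R : R) ^+ m =
    \sum_(i < m.+1) ('C(m, i) * a ^ i)%N%:R * x%:R ^+ i.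
  rewrite -addn1 natrD exprD1n; apply: eq_bigr => i _.
  by rewrite natrM exprMn -mulr_natl !natrM natrX mulrA.
rewrite horner_sum /countQ natrD natrM natr_sum natrX binomial.
under [X in _ + _ * X]eq_bigr do rewrite natrX binomial.
rewrite exchange_big mulr_sumr -big_split; apply: eq_bigr => i _.
rewrite hornerZ hornerD hornerXn hornerZ horner_faulhaber mulrDr.
by rewrite -mulr_sumr mulrCA.
Qed.

Lemma coef_ehrhartQ m a d : (ehrhartQ m a)`_d =
  \sum_(i < m.+1) ('C(m, i) * a ^ i)%:R * ((i == d :> nat)%:R + 2 * (faulhaber R i)`_d).
Proof.
rewrite coef_sum; apply: eq_bigr => i _.
by rewrite coefZ coefD coefXn coefZ eq_sym.
Qed.

Lemma sum_coef_ehrhartQ_eq0 i m a d : (i <= d)%N ->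
  \sum_(r < i) ('C(m, r) * a ^ r)%:R *
    ((r == d.+1 :> nat)%:R + 2 * (faulhaber R r)`_d.+1) = 0.
Proof.
move=> le_id; apply: big1 => r _.
rewrite coef_faulhaber_eq0 ?ltnS ?(leq_trans _ le_id) // ltn_eqF ?mulr0 ?addr0 ?mulr0 //.
by rewrite ltnS (leq_trans _ le_id) // ltnW.
Qed.

Lemma coef_pred_ehrhartQ_ge i a :
  (a ^ i.+2)%:R / 3 <= (ehrhartQ i.+2 a)`_i.+1.
Proof.
rewrite coef_ehrhartQ !big_ord_recr /= sum_coef_ehrhartQ_eq0 // add0r.
rewrite coef_faulhaber_top coef_faulhaber_top1 coef_faulhaber_top2 eqxx ltn_eqF // gtn_eqF //.
rewrite mulrN divff ?pnatr_eq0 // subrr mulr0 addr0 binn mul1n /= !add0r.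
rewrite -[X in X <= _]add0r; apply: lerD; first by rewrite mulr_ge0 ?divr_ge0.
apply: ler_wpM2l => //.
have -> : 2 * (i.+2%:R / 12) = 3^-1 + i%:R / 6 :> R.
  by rewrite -addn2 natrD; field.
by apply: ler_wpDr; rewrite ?divr_ge0.
Qed.

Lemma coef_pred2_ehrhartQ_ge i a :
  (a ^ i.+2)%:R / 3 <= (ehrhartQ i.+3 a)`_i.+1.
Proof.
rewrite coef_ehrhartQ !big_ord_recr /= sum_coef_ehrhartQ_eq0 // add0r.
rewrite coef_faulhaber_top coef_faulhaber_top1 coef_faulhaber_top2 coef_faulhaber_top3.
rewrite eqxx ltn_eqF // !gtn_eqF // /= !add0r !mulr0 addr0.
rewrite mulrN divff ?pnatr_eq0 // subrr mulr0 addr0 binSn.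
rewrite [in X in _ + X]mulnC [in X in _ + X]natrM -mulrA.
rewrite -[X in X <= _]add0r; apply: lerD; first by rewrite mulr_ge0 ?divr_ge0.
apply: ler_wpM2l => //.
have -> : i.+3%:R * (2 * (i.+2%:R / 12)) = 3^-1 + (i.+1 * i.+4)%:R / 6 :> R.
  by rewrite natrM -[i.+4]addn4 -[i.+3]addn3 -[i.+2]addn2 -[i.+1]addn1 !natrD; field.
by apply: ler_wpDr; rewrite ?divr_ge0.
Qed.
End EhrhartQ.

Local Open Scope classical_set_scope.

Lemma conv_sublevel (R : realType) n (phi : 'rV[R]_n -> R) (S : set 'rV[R]_n) :
  (forall x y, phi (x + y) <= phi x + phi y) ->
  (forall a x, 0 <= a -> phi (a *: x) = a * phi x) ->
  (forall x, S x -> phi x <= 1) -> forall x, conv S x -> phi x <= 1.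
Proof.
move=> phiD phiZ phiS _ [m [w [v [w_ge0 [w_sum1 [Sv ->]]]]]].
have phi_sum : phi (\sum_(i < m) w i *: v i) <= \sum_(i < m) w i * phi (v i).
  apply: (big_ind2 (fun x y => phi x <= y)) => [|x1 x2 y1 y2 le1 le2|i _].
  - by rewrite -(scale0r (0 : 'rV[R]_n)) phiZ ?mul0r.
  - exact: le_trans (phiD _ _) (lerD le1 le2).
  - by rewrite phiZ.
apply: le_trans phi_sum _; rewrite -w_sum1; apply: ler_sum => i _.
by rewrite -[X in _ <= X]mulr1 ler_wpM2l ?phiS.
Qed.

Lemma subset_conv (R : realType) n (S : set 'rV[R]_n) : S `<=` conv S.
Proof.
move=> x Sx; exists 1%N, (fun=> 1), (fun=> x).
by rewrite big_ord1 scale1r; split=> //; rewrite big_ord1.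
Qed.

Lemma conv2 (R : realType) n (S : set 'rV[R]_n) u v t :
  S u -> S v -> 0 <= t <= 1 -> conv S ((1 - t) *: u + t *: v).
Proof.
move=> Su Sv /andP[t_ge0 t_le1].
exists 2%N, (fun i => if i == ord0 then 1 - t else t),
  (fun i => if i == ord0 then u else v).
split; first by move=> i; case: ifP; rewrite ?subr_ge0.
split; first by rewrite big_ord_recl big_ord1 subrK.
split; first by move=> i; case: ifP.
by rewrite big_ord_recl big_ord1.
Qed.

Lemma vecR_norm (R : realType) n (z : 'rV[int]_n) j :
  `|(vecR z : 'rV[R]_n) 0 j| = (absz (z 0 j))%:R.
Proof. by rewrite mxE -intr_norm -natr_absz. Qed.

(* If no dilate of K has i + 1 affinely independent lattice points, [succ_min K i]
   is the infimum of the empty set, 0, and 1 / 0 = 0. *)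
Lemma inv_succ_min_le (R : realType) n (K : set 'rV[R]_n) (r : R) i :
  0 < r -> (0 < i)%N -> (forall x, K x -> forall j, `|x 0 j| <= r) ->
  0 <= 1 / succ_min K i <= r.
Proof.
move=> r_gt0 i_gt0 Kr.
set S := [set t : R | 0 < t /\ lattice_affdim_ge (dilate t K) i].
have S_ge t : S t -> r^-1 <= t.
  case=> t_gt0 [z [Kz z_free]]; rewrite leNgt; apply/negP => t_lt.
  have z0 j : z j = 0.
    apply/rowP => k; have [y Ky yz] := Kz j.
    have : (absz (z j 0 k))%:R < 1 :> R.
      rewrite -vecR_norm -yz mxE normrM gtr0_norm //.
      apply: le_lt_trans (ler_wpM2l (ltW t_gt0) (Kr y Ky k)) _.
      by rewrite -ltr_pdivlMr // mul1r.
    by rewrite mxE ltrn1 ltnS leqn0 absz_eq0 => /eqP.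
  move: z_free; rewrite /row_free.
  suff -> : (\matrix_(j < i) (vecR (z (lift ord0 j)) - vecR (z ord0)) : 'M[R]_(i, n)) = 0.
    by rewrite mxrank0 => /eqP i0; rewrite -i0 in i_gt0.
  by apply/matrixP => a b; rewrite !mxE !z0 /vecR !mxE subrr.
rewrite /succ_min -/S; have [[t St]|S0] := pselect (exists t, S t); last first.
  have -> : S = set0 by apply/seteqP; split=> // t St; apply: S0; exists t.
  by rewrite inf0 invr0 mulr0 lexx ltW.
have inf_ge : r^-1 <= inf S by apply: lb_le_inf; [exists t | exact: S_ge].
have inf_gt0 : 0 < inf S by apply: lt_le_trans inf_ge; rewrite invr_gt0.
apply/andP; split; first by rewrite divr_ge0 // ltW.
by rewrite ler_pdivrMr // -ler_pdivrMl // mulr1.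
Qed.

Lemma esym_le (R : realType) n (x : 'I_n -> R) (c : R) i :
  (forall j, 0 <= x j <= c) -> 0 <= Defs.esym x i <= 'C(n, i)%:R * c ^+ i.
Proof.
move=> x_bd; apply/andP; split.
  by apply: sumr_ge0 => I _; apply: prodr_ge0 => j _; case/andP: (x_bd j).
apply: (@le_trans _ _ (\sum_(I : {set 'I_n} | #|I| == i) c ^+ i)).
  apply: ler_sum => I /eqP <-; rewrite -prodr_const; apply: ler_prod => j _.
  exact: x_bd.
rewrite sumr_const -[X in 'C(X, _)]card_ord -card_draws mulr_natl.
by rewrite cardsE.
Qed.

Section BoxPoints.
Variables m B : nat.

Definition box_point (x : {ffun 'I_m -> 'I_(2 * B).+1}) : 'rV[int]_m :=
  \row_j ((x j : nat)%:Z - B%:Z).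

Lemma absz_box_point x j : absz (box_point x 0 j) = `|x j - B|%N.
Proof. by rewrite mxE. Qed.

Lemma box_point_inj : injective box_point.
Proof.
move=> x y /rowP xy; apply/ffunP => j; apply/val_inj.
by have := xy j; rewrite !mxE => /addIr [].
Qed.

Lemma box_pointP (z : 'rV[int]_m) :
  (forall j, (absz (z 0%R j) <= B)%N) -> exists x, z = box_point x.
Proof.
move=> z_le; exists [ffun j => inord (absz (z 0 j + B%:Z))].
apply/rowP => j; have le_zB := z_le j; rewrite !mxE ffunE inordK; lia.
Qed.

Lemma lattice_count_box (R : realType) (K : set 'rV[R]_m) (P : pred 'rV[int]_m) :
  (forall z, K (vecR z) <-> P z) ->
  (forall z, P z -> forall j, (absz (z 0%R j) <= B)%N) ->
  lattice_count K #|[pred x | P (box_point x)]|.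
Proof.
move=> KP PB; exists (map box_point (enum [pred x | P (box_point x)])).
split; first by rewrite (map_inj_uniq box_point_inj) enum_uniq.
split; last by rewrite size_map -cardE.
move=> z; rewrite KP; split; first by case/mapP => x; rewrite mem_enum => Px ->.
move=> Pz; have [x zE] := box_pointP (PB z Pz).
by apply/mapP; exists x; rewrite // mem_enum inE -zE.
Qed.
End BoxPoints.

Section DistnSums.
Local Open Scope nat_scope.

Lemma sum_distn_sym B (g : nat -> nat) :
  \sum_(a < (2 * B).+1) g `|a - B| = g 0 + 2 * \sum_(i < B) g i.+1.
Proof.
rewrite -(big_mkord xpredT (fun a => g `|a - B|)).
rewrite (big_cat_nat _ (n := B)) //; last by lia.
rewrite (big_cat_nat _ (m := B) (n := B.+1)) //; last by lia.
rewrite big_nat1 distnn big_nat_rev /= add0n.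
have left_half : \sum_(0 <= i < B) g `|B - i.+1 - B| = \sum_(i < B) g i.+1.
  by rewrite big_mkord; apply: eq_bigr => i _; congr g; have := ltn_ord i; lia.
have right_half : \sum_(B.+1 <= i < (2 * B).+1) g `|i - B| = \sum_(i < B) g i.+1.
  rewrite -(add0n B.+1) big_addn (_ : (2 * B).+1 - B.+1 = B); last by lia.
  by rewrite big_mkord; apply: eq_bigr => i _; congr g; lia.
by rewrite left_half right_half addnCA mul2n -addnn.
Qed.

Lemma sum_lt_rev (B k : nat) (g : nat -> nat) : k <= B ->
  \sum_(i < B) (i < k) * g (k - i.+1) = \sum_(j < k) g j.
Proof.
move=> le_kB; rewrite -(big_mkord xpredT (fun i => (i < k) * g (k - i.+1))).
rewrite (big_cat_nat _ (n := k)) //= [X in _ + X]big1_seq ?addn0; last first.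
  by move=> i; rewrite mem_index_iota => /and3P[_ le_ki _]; rewrite ltnNge le_ki.
rewrite big_nat_rev -(big_mkord xpredT g); apply: eq_big_nat => i /andP[_ lt_ik].
by rewrite add0n (_ : k - i.+1 < k) ?mul1n; [congr g|]; lia.
Qed.

Lemma card_distn_le B L : L <= B ->
  #|[pred a : 'I_(2 * B).+1 | `|a - B| <= L]| = (2 * L).+1.
Proof.
move=> le_LB; rewrite -sum1_card big_mkcond /=.
rewrite (sum_distn_sym B (fun t => if t <= L then 1 else 0)) /=.
have -> : \sum_(i < B) (if i < L then 1 else 0) = L.
  rewrite (eq_bigr (fun i : 'I_B => (i < L) * 1)) => [|i _]; last by case: (i < L).
  by rewrite (sum_lt_rev (fun=> 1)) // big_const_ord iter_addn_0 mul1n.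
by rewrite add1n.
Qed.
End DistnSums.

Section Qnl.
Variables (R : realType) (n l : nat).
Hypothesis l_gt0 : (0 < l)%N.

Local Notation Q := (Qnl n.+1 l : set 'rV[R]_n.+1).
Local Notation generators :=
  (cube_times0 n.+1 l `|` [set e_last n.+1; - e_last n.+1] : set 'rV[R]_n.+1).

Let lR_gt0 : (0 : R) < l%:R. Proof. by rewrite ltr0n. Qed.

Definition Qnl_bounds (t : R) (x : 'rV[R]_n.+1) : Prop :=
  `|x 0 ord_max| <= t /\
  forall j, j != ord_max -> `|x 0 j| <= l%:R * (t - `|x 0 ord_max|).

Lemma e_lastE j : (e_last n.+1 : 'rV[R]_n.+1) 0 j = (j == ord_max)%:R.
Proof. by rewrite /e_last mxE -[val j == _]/(j == ord_max); case: (_ == _). Qed.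

Lemma Qnl_bounds_generators v : generators v -> Qnl_bounds 1 v.
Proof.
case=> [cube|[->|->]]; rewrite /Qnl_bounds.
- have vn : v 0 ord_max = 0 by have := cube ord_max; rewrite /= eqxx.
  rewrite vn normr0 ler01 subr0 mulr1; split=> // j jn.
  by have := cube j; rewrite -[val j == _]/(j == ord_max) (negbTE jn).
- rewrite e_lastE eqxx normr1 subrr mulr0; split=> // j jn.
  by rewrite e_lastE (negbTE jn) normr0.
- rewrite mxE e_lastE eqxx normrN normr1 subrr mulr0; split=> // j jn.
  by rewrite mxE e_lastE (negbTE jn) oppr0 normr0.
Qed.

Lemma Qnl_bounds_gauge (t : R) (x : 'rV[R]_n.+1) j :
  (`|x 0 j| <= l%:R * (t - `|x 0 ord_max|)) = (`|x 0 ord_max| + `|x 0 j| / l%:R <= t).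
Proof. by rewrite -ler_pdivrMl // mulrC lerBrDl. Qed.

Lemma Qnl_boundsP x : Q x -> Qnl_bounds 1 x.
Proof.
move=> Qx; split.
  apply: (conv_sublevel (phi := fun y => `|y 0 ord_max|)) Qx
    => [y z|a y a_ge0|v /Qnl_bounds_generators[]//].
    by rewrite mxE ler_normD.
  by rewrite mxE normrM ger0_norm.
move=> j jn; rewrite Qnl_bounds_gauge.
apply: (conv_sublevel (phi := fun y => `|y 0 ord_max| + `|y 0 j| / l%:R)) Qx.
- move=> y z; rewrite !mxE addrACA -mulrDl.
  by apply: lerD; rewrite ?ler_wpM2r ?invr_ge0 ?ler0n ?ler_normD.
- by move=> a y a_ge0; rewrite !mxE !normrM ger0_norm // mulrDr mulrA.
- by move=> v /Qnl_bounds_generators[_ /(_ j jn)]; rewrite Qnl_bounds_gauge.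
Qed.

Lemma Qnl_of_bounds x : Qnl_bounds 1 x -> Q x.
Proof.
case=> xn_le1 xj_le; set h := x 0 ord_max.
set s : 'rV[R]_n.+1 := if h < 0 then - e_last n.+1 else e_last n.+1.
set c := x - h *: e_last n.+1.
have cE j : c 0 j = if j == ord_max then 0 else x 0 j.
  rewrite !mxE -[val j == _]/(j == ord_max).
  by case: eqP => [->|]; rewrite ?mulr1 ?subrr ?mulr0 ?subr0.
have sE : `|h| *: s = h *: e_last n.+1.
  rewrite /s; case: ltrP => [h_lt0|h_ge0]; last by rewrite ger0_norm.
  by rewrite ltr0_norm // scaleNr scalerN opprK.
have Ss : generators s by rewrite /s; case: ifP => _; right; [right|left].
have [xn1|xn_lt1] := eqVneq `|h| 1.
  suff -> : x = s by apply: subset_conv.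
  rewrite -[s]scale1r -xn1 sE -[LHS](subrK (h *: e_last n.+1)) -/c.
  suff -> : c = 0 by rewrite add0r.
  apply/rowP => j; rewrite cE mxE; case: ifP => // /negbT jn.
  by apply/eqP; rewrite -normr_le0 (le_trans (xj_le j jn)) // -/h xn1 subrr mulr0.
(* Otherwise x = (1 - |x_n|) x' + |x_n| s with x' in the cube l C_(n-1) x {0}. *)
have b_gt0 : 0 < 1 - `|h| by rewrite subr_gt0 lt_neqAle xn_lt1.
have -> : x = (1 - `|h|) *: ((1 - `|h|)^-1 *: c) + `|h| *: s.
  by rewrite scalerA divff ?gt_eqF // scale1r sE /c [RHS]subrK.
apply: conv2 => //; last by rewrite normr_ge0.
left => j; rewrite mxE cE.
rewrite -[val j == _]/(j == ord_max); case: eqP => [_|/eqP jn]; first by rewrite mulr0.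
by rewrite normrM normfV (gtr0_norm b_gt0) mulrC ler_pdivrMr //; apply: xj_le.
Qed.

Lemma Qnl_boundsZ (s t : R) x : 0 <= s -> Qnl_bounds t x -> Qnl_bounds (s * t) (s *: x).
Proof.
move=> s_ge0 [xn_le xj_le]; split; first by rewrite mxE normrM (ger0_norm s_ge0) ler_wpM2l.
move=> j jn; rewrite !mxE !normrM (ger0_norm s_ge0) -mulrBr mulrCA ler_wpM2l //.
exact: xj_le.
Qed.

Lemma dilate_QnlE (t : R) x : 0 <= t -> dilate t Q x <-> Qnl_bounds t x.
Proof.
move=> t_ge0; split=> [[y /Qnl_boundsP Qy <-]|xt].
  by rewrite -[X in Qnl_bounds X]mulr1; apply: Qnl_boundsZ.
have [t0|t_neq0] := eqVneq t 0; last first.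
  exists (t^-1 *: x); last by rewrite scalerA divff // scale1r.
  by apply: Qnl_of_bounds; rewrite -(mulVf t_neq0); apply: Qnl_boundsZ; rewrite ?invr_ge0.
exists 0.
  by apply: Qnl_of_bounds; split=> [|j _]; rewrite !mxE !normr0 ?ler01 // subr0 mulr1 ler0n.
case: xt => xn_le xj_le; rewrite t0 in xn_le xj_le.
have xn0 : `|x 0 ord_max| = 0 by apply/eqP; rewrite eq_le xn_le normr_ge0.
apply/rowP => j; rewrite !mxE mulr0; apply/esym/eqP; rewrite -normr_le0.
have [->|jn] := eqVneq j ord_max; first by rewrite xn0.
by rewrite (le_trans (xj_le j jn)) // xn0 subrr mulr0.
Qed.

Definition Qnl_lattice (k : nat) (z : 'rV[int]_n.+1) : bool :=
  (absz (z 0%R ord_max) <= k)%N &&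
  [forall j, (j != ord_max) ==> (absz (z 0%R j) <= l * (k - absz (z 0%R ord_max)))%N].

Lemma dilate_Qnl_vecR k z : dilate k%:R Q (vecR z) <-> Qnl_lattice k z.
Proof.
rewrite dilate_QnlE ?ler0n // /Qnl_bounds vecR_norm ler_nat.
split=> [[zn_le zj_le]|/andP[zn_le /forallP zj_le]].
  rewrite /Qnl_lattice zn_le; apply/forallP => j; apply/implyP => jn.
  by have := zj_le j jn; rewrite vecR_norm -natrB // -natrM ler_nat.
split=> // j jn; rewrite vecR_norm -natrB // -natrM ler_nat.
exact: implyP (zj_le j) jn.
Qed.

Section Counting.
Variable k : nat.
Local Notation B := (l * k)%N.
Local Notation boxT := {ffun 'I_n.+1 -> 'I_(2 * B).+1}.

Lemma card_Qnl_lattice_fiber (a : 'I_(2 * B).+1) :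
  (#|[pred x : boxT | Qnl_lattice k (box_point x) && (x ord_max == a)]| =
   (`|a - B| <= k) * (2 * (l * (k - `|a - B|))).+1 ^ n)%N.
Proof.
pose F (j : 'I_n.+1) : pred 'I_(2 * B).+1 :=
  if j == ord_max then [pred b | (b == a) && (`|a - B| <= k)%N]
  else [pred b : 'I_(2 * B).+1 | (`|b - B| <= l * (k - `|a - B|))%N].
have -> : (#|[pred x : boxT | Qnl_lattice k (box_point x) && (x ord_max == a)]| =
    #|family F|)%N.
  apply: eq_card => x; rewrite !inE /Qnl_lattice !absz_box_point.
  apply/andP/familyP => [[/andP[x_le /forallP xj_le] /eqP xa] j|xF].
    rewrite /F; case: eqP => [->|/eqP jn]; first by rewrite inE xa eqxx -xa x_le.
    by rewrite inE -xa; have := xj_le j; rewrite jn absz_box_point.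
  have := xF ord_max; rewrite /F eqxx inE => /andP[/eqP xa a_le].
  rewrite xa a_le eqxx; split=> //; apply/forallP => j; apply/implyP => jn.
  by have := xF j; rewrite /F (negbTE jn) inE absz_box_point.
rewrite card_family foldrE big_image /= (bigD1 ord_max) //= {1}/F eqxx.
congr (_ * _)%N.
  case: (`|a - B| <= k)%N.
    by rewrite (@eq_card _ _ (pred1 a)) ?card1 // => b; rewrite !inE ?andbT.
  by rewrite (@eq_card _ _ pred0) ?card0 // => b; rewrite !inE andbF.
rewrite (eq_bigr (fun _ => (2 * (l * (k - `|a - B|))).+1)%N).
  by rewrite prod_nat_const cardC1 card_ord.
move=> j jn; rewrite /F (negbTE jn) card_distn_le //.
by rewrite leq_mul2l leq_subr orbT.
Qed.

Lemma card_Qnl_lattice :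
  (#|[pred x : boxT | Qnl_lattice k (box_point x)]| = countQ n (2 * l) k)%N.
Proof.
rewrite -sum1_card (partition_big (fun x : boxT => x ord_max) xpredT) //=.
under eq_bigr => a _ do rewrite sum1_card card_Qnl_lattice_fiber.
rewrite (sum_distn_sym B (fun t => (t <= k) * (2 * (l * (k - t))).+1 ^ n)%N).
rewrite (sum_lt_rev (fun j => (2 * (l * j)).+1 ^ n)%N) ?leq_pmull //.
rewrite /countQ leq0n mul1n subn0 mulnA; congr (_ + 2 * _)%N.
by apply: eq_bigr => j _; rewrite mulnA.
Qed.
End Counting.

Lemma lattice_count_Qnl k : lattice_count (dilate k%:R Q) (countQ n (2 * l) k).
Proof.
rewrite -card_Qnl_lattice.
apply: lattice_count_box => [z|z /andP[zn_le /forallP zj_le] j].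
  exact: dilate_Qnl_vecR.
have le_kB : (k <= l * k)%N by rewrite leq_pmull.
have [->|jn] := eqVneq j ord_max; first exact: leq_trans zn_le le_kB.
by apply: leq_trans (implyP (zj_le j) jn) _; rewrite leq_mul2l leq_subr orbT.
Qed.

Lemma is_ehrhart_poly_Qnl : is_ehrhart_poly Q (ehrhartQ R n (2 * l)).
Proof.
move=> k; exists (countQ n (2 * l) k); split; first exact: lattice_count_Qnl.
exact: horner_ehrhartQ.
Qed.

Lemma Qnl_coord_le x : Q x -> forall j, `|x 0 j| <= l%:R.
Proof.
case/Qnl_boundsP => xn_le xj_le j.
have l_ge1 : (1 : R) <= l%:R by rewrite ler1n.
have [->|jn] := eqVneq j ord_max; first exact: le_trans xn_le l_ge1.
apply: le_trans (xj_le j jn) _.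
by rewrite -[X in _ <= X]mulr1 ler_wpM2l // lerBlDr lerDl.
Qed.

Lemma diffbody_Qnl_coord_le x : diffbody Q x -> forall j, `|x 0 j| <= (2 * l)%:R.
Proof.
case=> y [z [Qy [Qz ->]]] j; rewrite !mxE natrM mulr_natl mulr2n.
exact: le_trans (ler_normB _ _) (lerD (Qnl_coord_le Qy j) (Qnl_coord_le Qz j)).
Qed.

Lemma sigma_poly_Qnl_le d :
  0 <= sigma_poly Q d <= 'C(n.+1, d)%:R * (2 * l)%:R ^+ d.
Proof.
apply: esym_le => j; apply: inv_succ_min_le => //; first by rewrite ltr0n muln_gt0.
exact: diffbody_Qnl_coord_le.
Qed.
End Qnl.

Lemma mulr_lt_of_growth (R : realFieldType) (c K s A L : R) d :
  0 <= s <= K * L ^+ d -> L ^+ d.+1 / 3 <= A -> 0 < L -> 3 * c * K < L -> c * s < A.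
Proof.
move=> /andP[s_ge0 s_le] A_ge L_gt0 cK_lt; apply: lt_le_trans A_ge.
have Ld_gt0 : 0 < L ^+ d by rewrite exprn_gt0.
have [c_le0|c_gt0] := lerP c 0.
  by apply: le_lt_trans (_ : c * s <= 0) _; rewrite ?mulr_le0_ge0 ?divr_gt0 ?exprn_gt0.
apply: le_lt_trans (ler_wpM2l (ltW c_gt0) s_le) _.
rewrite exprSr; nra.
Qed.

Lemma Qnl_ehrhart_coef_dominates (R : realType) n d :
  (forall a, (a ^ d.+1)%:R / 3 <= (ehrhartQ R n a)`_d) ->
  forall c : R, exists l (p : {poly R}),
    is_ehrhart_poly (Qnl n.+1 l) p /\ c * sigma_poly (Qnl n.+1 l) d < p`_d.
Proof.
move=> coef_ge c; set K : R := 'C(n.+1, d)%:R.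
set l := (Num.Def.truncn `|3 * c * K|).+1.
have l_gt0 : (0 < l)%N by [].
exists l, (ehrhartQ R n (2 * l)); split; first exact: is_ehrhart_poly_Qnl.
apply: (mulr_lt_of_growth (sigma_poly_Qnl_le R n l_gt0 d)).
- by rewrite -natrX coef_ge.
- by rewrite ltr0n muln_gt0.
have l_gt : `|3 * c * K| < l%:R := truncnS_gt _.
rewrite natrM; apply: le_lt_trans (ler_norm _) _; apply: lt_le_trans l_gt _.
by rewrite ler_peMl ?ler0n // ler1n.
Qed.

Theorem proposition1p3 (R : realType) (n : nat) (hn : (3 <= n)%N) :
  (forall c : R, exists (l : nat) (p : {poly R}),
      is_ehrhart_poly (Qnl n l) p /\
      c * sigma_poly (Qnl n l) (n - 2)%N < p`_(n - 2)) /\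
  ((4 <= n)%N ->
   forall c : R, exists (l : nat) (p : {poly R}),
      is_ehrhart_poly (Qnl n l) p /\
      c * sigma_poly (Qnl n l) (n - 3)%N < p`_(n - 3)).
Proof.
case: n hn => [|[|[|n]]] // _; split.
  rewrite subSS subSS subn0; apply: Qnl_ehrhart_coef_dominates => a.
  exact: coef_pred_ehrhartQ_ge.
case: n => [//|n] _; rewrite !subSS subn0; apply: Qnl_ehrhart_coef_dominates => a.
exact: coef_pred2_ehrhartQ_ge.
Qed.
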